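(* Let $E$ be a pseudo effect algebra satisfying (RDP). If $m_1$ and $m_2$ are $\sigma$-additive measures on $E$, then so are $m_1\vee m_2$ and $m_1\wedge m_2$ (lattice operations in $\mathcal J(E)$).
   Context: Pseudo effect algebra: partial algebra $(E;+,0,1)$ such that for all $a,b,c$: (i) $a+b$ and $(a+b)+c$ exist iff $b+c$ and $a+(b+c)$ exist, and then they are equal; (ii) there is exactly one $d$ and one $e$ with $a+d=e+a=1$; (iii) if $a+b$ exists there are $d,e$ with $a+b=d+a=b+e$; (iv) if $1+a$ or $a+1$ exists then $a=0$. Order: $a\le b$ iff $a+c=b$ for some $c$. (RDP): whenever $a_1+a_2=b_1+b_2$ there are $d_1,\dots,d_4$ with $d_1+d_2=a_1$, $d_3+d_4=a_2$, $d_1+d_3=b_1$, $d_2+d_4=b_2$. Measure: $m:E\to[0,\infty)$ additive on defined sums. A signed measure $m$ is $\sigma$-additive if whenever $a_1\le a_2\le\cdots$ and $a=\bigvee_n a_n$ exists in $E$, $m(a)=\lim_n m(a_n)$; for a measure this is equivalent to: $a_n\searrow 0$ (decreasing with infimum $0$) implies $m(a_n)\to0$. $\mathcal J(E)$: signed measures that are differences of two measures, ordered by $m_1\le^+m_2$ iff $m_2-m_1$ is a measure (a lattice-ordered group under (RDP)). *)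

From Stdlib Require Import Reals.
Open Scope R_scope.

(* A partial binary operation is modelled as E -> E -> option E:
   [pl a b = Some s] means "a + b exists and equals s". *)

Definition sum_l {E : Type} (pl : E -> E -> option E) (a b c : E) : option E :=
  match pl a b with Some ab => pl ab c | None => None end.
Definition sum_r {E : Type} (pl : E -> E -> option E) (a b c : E) : option E :=
  match pl b c with Some bc => pl a bc | None => None end.

Record PEA := mkPEA {
  pea_car :> Type;
  pea_plus : pea_car -> pea_car -> option pea_car;
  pea_zero : pea_car;
  pea_one : pea_car;
  (* (i): (a+b)+c exists iff a+(b+c) exists, and then they are equal *)
  pea_assoc : forall a b c, sum_l pea_plus a b c = sum_r pea_plus a b c;
  pea_compl_r : forall a, exists! d, pea_plus a d = Some pea_one;
  pea_compl_l : forall a, exists! e, pea_plus e a = Some pea_one;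
  pea_conj : forall a b s, pea_plus a b = Some s ->
      exists d e, pea_plus d a = Some s /\ pea_plus b e = Some s;
  pea_one_zero : forall a,
      (pea_plus pea_one a <> None \/ pea_plus a pea_one <> None) -> a = pea_zero
}.

Definition pea_le (E : PEA) (a b : E) : Prop := exists c, pea_plus E a c = Some b.

Definition RDP (E : PEA) : Prop :=
  forall a1 a2 b1 b2 s : E,
    pea_plus E a1 a2 = Some s -> pea_plus E b1 b2 = Some s ->
    exists d1 d2 d3 d4 : E,
      pea_plus E d1 d2 = Some a1 /\ pea_plus E d3 d4 = Some a2 /\
      pea_plus E d1 d3 = Some b1 /\ pea_plus E d2 d4 = Some b2.

Definition pea_is_sup (E : PEA) (a : nat -> E) (x : E) : Prop :=
  (forall n, pea_le E (a n) x) /\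
  (forall y, (forall n, pea_le E (a n) y) -> pea_le E x y).

Definition additive (E : PEA) (m : E -> R) : Prop :=
  forall a b s : E, pea_plus E a b = Some s -> m s = m a + m b.

Definition measure (E : PEA) (m : E -> R) : Prop :=
  (forall a, 0 <= m a) /\ additive E m.

Definition sigma_additive (E : PEA) (m : E -> R) : Prop :=
  forall (a : nat -> E) (x : E),
    (forall n, pea_le E (a n) (a (S n))) -> pea_is_sup E a x ->
    Un_cv (fun n => m (a n)) (m x).

Definition inJ (E : PEA) (m : E -> R) : Prop :=
  exists mu nu : E -> R, measure E mu /\ measure E nu /\ forall a, m a = mu a - nu a.

Definition leJ (E : PEA) (m1 m2 : E -> R) : Prop :=
  measure E (fun a => m2 a - m1 a).

Definition is_joinJ (E : PEA) (m1 m2 m : E -> R) : Prop :=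
  inJ E m /\ leJ E m1 m /\ leJ E m2 m /\
  forall k, inJ E k -> leJ E m1 k -> leJ E m2 k -> leJ E m k.

Definition is_meetJ (E : PEA) (m1 m2 m : E -> R) : Prop :=
  inJ E m /\ leJ E m m1 /\ leJ E m m2 /\
  forall k, inJ E k -> leJ E k m1 -> leJ E k m2 -> leJ E k m.

(** The join in J(E) is given by the Riesz-type formula
    (m1 \/ m2)(a) = sup { m1 a1 + m2 a2 : a1 + a2 = a }: (RDP) makes it
    subadditive, and associativity together with axiom (iii) makes it
    superadditive, so it is a measure; the meet is m1 + m2 - (m1 \/ m2).
    Any join m satisfies 0 <= m <= m1 + m2 and any meet 0 <= m <= m1, and a
    measure dominated by a sigma-additive measure is sigma-additive, because
    m x - m a_n = m c <= mu c = mu x - mu a_n where a_n + c = x. *)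

From Stdlib Require Import Reals Lra.
Open Scope R_scope.

Set Implicit Arguments.

Section PseudoEffectAlgebra.

Context {E : PEA}.

Lemma pea_plusA_lr {a b c ab s : E} :
  pea_plus E a b = Some ab -> pea_plus E ab c = Some s ->
  exists bc, pea_plus E b c = Some bc /\ pea_plus E a bc = Some s.
Proof.
  intros Hab Hs. pose proof (pea_assoc E a b c) as H.
  unfold sum_l, sum_r in H. rewrite Hab, Hs in H.
  destruct (pea_plus E b c) as [bc|]; [eauto | discriminate].
Qed.

Lemma pea_plusA_rl {a b c bc s : E} :
  pea_plus E b c = Some bc -> pea_plus E a bc = Some s ->
  exists ab, pea_plus E a b = Some ab /\ pea_plus E ab c = Some s.
Proof.
  intros Hbc Hs. pose proof (pea_assoc E a b c) as H.
  unfold sum_l, sum_r in H. rewrite Hbc, Hs in H.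
  destruct (pea_plus E a b) as [ab|]; [eauto | discriminate].
Qed.

Lemma pea_one_plus0 : pea_plus E (pea_one E) (pea_zero E) = Some (pea_one E).
Proof.
  destruct (pea_compl_r E (pea_one E)) as [d [Hd _]].
  assert (d = pea_zero E) as -> by (apply pea_one_zero; left; congruence).
  exact Hd.
Qed.

Lemma pea_plus0_one : pea_plus E (pea_zero E) (pea_one E) = Some (pea_one E).
Proof.
  destruct (pea_compl_l E (pea_one E)) as [e [He _]].
  assert (e = pea_zero E) as -> by (apply pea_one_zero; right; congruence).
  exact He.
Qed.

(* Both [0 + a] and [a] are left complements of the right complement of [a]. *)
Lemma pea_plus0l (a : E) : pea_plus E (pea_zero E) a = Some a.
Proof.
  destruct (pea_compl_r E a) as [d [Hd _]].
  destruct (pea_plusA_rl Hd pea_plus0_one) as [s [Hs Hsd]].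
  destruct (pea_compl_l E d) as [e [_ Hunique]].
  rewrite Hs, <- (Hunique s Hsd), (Hunique a Hd). reflexivity.
Qed.

Lemma pea_plus0r (a : E) : pea_plus E a (pea_zero E) = Some a.
Proof.
  destruct (pea_compl_l E a) as [e [He _]].
  destruct (pea_plusA_lr He pea_one_plus0) as [t [Ht Het]].
  destruct (pea_compl_r E e) as [d [_ Hunique]].
  rewrite Ht, <- (Hunique t Het), (Hunique a He). reflexivity.
Qed.

(* Regrouping (a1 + a2) + (b1 + b2) as (a1 + d) + (a2 + b2), where axiom (iii)
   moves b1 past a2: d + a2 = a2 + b1. *)
Lemma pea_plus_interchange {a1 a2 b1 b2 a b s : E} :
  pea_plus E a1 a2 = Some a -> pea_plus E b1 b2 = Some b ->
  pea_plus E a b = Some s ->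
  exists d u w v,
    pea_plus E d a2 = Some u /\ pea_plus E a2 b1 = Some u /\
    pea_plus E a1 d = Some w /\ pea_plus E a2 b2 = Some v /\
    pea_plus E w v = Some s.
Proof.
  intros Ha Hb Hs.
  destruct (pea_plusA_lr Ha Hs) as [t [Ht Hat]].
  destruct (pea_plusA_rl Hb Ht) as [u [Hu Hut]].
  destruct (pea_conj E _ _ _ Hu) as [d [_ [Hd _]]].
  destruct (pea_plusA_lr Hd Hut) as [v [Hv Hdv]].
  destruct (pea_plusA_rl Hdv Hat) as [w [Hw Hwv]].
  exists d, u, w, v. auto.
Qed.

End PseudoEffectAlgebra.

Section Measures.

Variable E : PEA.
Implicit Types m k mu : E -> R.

Lemma additive0 m : additive E m -> m (pea_zero E) = 0.
Proof.
  intros Hm. pose proof (Hm _ _ _ (pea_plus0r (pea_zero E))). lra.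
Qed.

Lemma additive_add m k :
  additive E m -> additive E k -> additive E (fun a => m a + k a).
Proof. intros Hm Hk a b s H. rewrite (Hm _ _ _ H), (Hk _ _ _ H). ring. Qed.

Lemma additive_sub m k :
  additive E m -> additive E k -> additive E (fun a => k a - m a).
Proof. intros Hm Hk a b s H. rewrite (Hm _ _ _ H), (Hk _ _ _ H). ring. Qed.

Lemma measure_ext m k : (forall a, m a = k a) -> measure E m -> measure E k.
Proof.
  intros Hmk [Hpos Hadd]. split.
  - intro a. rewrite <- Hmk. apply Hpos.
  - intros a b s H. rewrite <- !Hmk. exact (Hadd _ _ _ H).
Qed.

Lemma measure_add m k :
  measure E m -> measure E k -> measure E (fun a => m a + k a).
Proof.
  intros [Hm Ham] [Hk Hak]. split.
  - intro a. specialize (Hm a). specialize (Hk a). lra.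
  - exact (additive_add Ham Hak).
Qed.

Lemma measure_le_sum m {a b s : E} :
  measure E m -> pea_plus E a b = Some s -> m a <= m s.
Proof.
  intros [Hpos Hadd] H. rewrite (Hadd _ _ _ H). specialize (Hpos b). lra.
Qed.

Lemma measure_inJ m : measure E m -> inJ E m.
Proof.
  intros Hm. exists m, (fun _ => 0).
  split; [exact Hm | split; [split | intro a; ring]].
  - intros; lra.
  - intros a b s _. ring.
Qed.

Lemma leJ_le m k (a : E) : leJ E m k -> m a <= k a.
Proof. intros [Hpos _]. specialize (Hpos a). lra. Qed.

Lemma leJ_additive m k : additive E m -> leJ E m k -> additive E k.
Proof.
  intros Hm [_ Hkm] a b s H.
  pose proof (Hkm _ _ _ H). pose proof (Hm _ _ _ H). lra.
Qed.

Lemma leJ_measure m k : measure E m -> leJ E m k -> measure E k.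
Proof.
  intros Hm Hmk. apply (measure_ext (m := fun a => m a + (k a - m a))).
  - intro a. ring.
  - exact (measure_add Hm Hmk).
Qed.

Lemma sigma_additive_add m k :
  sigma_additive E m -> sigma_additive E k ->
  sigma_additive E (fun a => m a + k a).
Proof.
  intros Hm Hk a x Hinc Hsup. apply CV_plus; [apply Hm | apply Hk]; assumption.
Qed.

Lemma sigma_additive_dominated m mu :
  measure E m -> measure E mu -> sigma_additive E mu ->
  (forall a, m a <= mu a) -> sigma_additive E m.
Proof.
  intros [Hpos Hadd] [Hmupos Hmuadd] Hmu Hle a x Hinc Hsup eps Heps.
  destruct (Hmu a x Hinc Hsup eps Heps) as [N HN].
  exists N. intros n Hn. specialize (HN n Hn).
  destruct (proj1 Hsup n) as [c Hc].
  unfold R_dist in *.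
  rewrite (Hadd _ _ _ Hc). rewrite (Hmuadd _ _ _ Hc) in HN.
  replace (m (a n) - (m (a n) + m c)) with (- m c) by ring.
  replace (mu (a n) - (mu (a n) + mu c)) with (- mu c) in HN by ring.
  rewrite Rabs_Ropp, Rabs_pos_eq by apply Hpos.
  rewrite Rabs_Ropp, Rabs_pos_eq in HN by apply Hmupos.
  specialize (Hle c). lra.
Qed.

End Measures.

Section Join.

Variables (E : PEA) (m1 m2 : E -> R).
Hypotheses (hm1 : measure E m1) (hm2 : measure E m2).

Definition split_values (a : E) (r : R) : Prop :=
  exists a1 a2, pea_plus E a1 a2 = Some a /\ r = m1 a1 + m2 a2.

Lemma split_values_has_lub (a : E) : {r | is_lub (split_values a) r}.
Proof.
  apply completeness.
  - exists (m1 a + m2 a). intros r [a1 [a2 [H ->]]].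
    pose proof (measure_le_sum hm1 H).
    pose proof (proj2 hm2 _ _ _ H). pose proof (proj1 hm2 a1). lra.
  - exists (m1 a + m2 (pea_zero E)), a, (pea_zero E).
    split; [apply pea_plus0r | reflexivity].
Qed.

Definition join_value (a : E) : R := proj1_sig (split_values_has_lub a).

Lemma le_join_value {a1 a2 a : E} :
  pea_plus E a1 a2 = Some a -> m1 a1 + m2 a2 <= join_value a.
Proof.
  intros H. apply (proj1 (proj2_sig (split_values_has_lub a))). exists a1, a2. auto.
Qed.

Lemma join_value_le (a : E) (r : R) :
  (forall a1 a2, pea_plus E a1 a2 = Some a -> m1 a1 + m2 a2 <= r) ->
  join_value a <= r.
Proof.
  intros Hr. apply (proj2 (proj2_sig (split_values_has_lub a))).
  intros x [a1 [a2 [H ->]]]. exact (Hr _ _ H).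
Qed.

Lemma le_join_l (a : E) : m1 a <= join_value a.
Proof.
  pose proof (le_join_value (pea_plus0r a)) as Hle.
  rewrite (additive0 (proj2 hm2)) in Hle. lra.
Qed.

Lemma le_join_r (a : E) : m2 a <= join_value a.
Proof.
  pose proof (le_join_value (pea_plus0l a)) as Hle.
  rewrite (additive0 (proj2 hm1)) in Hle. lra.
Qed.

Lemma join_subadditive {a b s : E} :
  RDP E -> pea_plus E a b = Some s -> join_value s <= join_value a + join_value b.
Proof.
  intros hRDP Hs. apply join_value_le. intros c1 c2 Hc.
  destruct (hRDP _ _ _ _ _ Hs Hc) as [d1 [d2 [d3 [d4 [H12 [H34 [H13 H24]]]]]]].
  rewrite (proj2 hm1 _ _ _ H13), (proj2 hm2 _ _ _ H24).
  pose proof (le_join_value H12). pose proof (le_join_value H34). lra.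
Qed.

Lemma join_superadditive {a b s : E} :
  pea_plus E a b = Some s -> join_value a + join_value b <= join_value s.
Proof.
  intros Hs.
  assert (join_value a <= join_value s - join_value b); [|lra].
  apply join_value_le. intros a1 a2 Ha.
  assert (join_value b <= join_value s - (m1 a1 + m2 a2)); [|lra].
  apply join_value_le. intros b1 b2 Hb.
  destruct (pea_plus_interchange Ha Hb Hs)
    as [d [u [w [v [Hdu [Hu [Hw [Hv Hwv]]]]]]]].
  assert (m1 d = m1 b1).
  { pose proof (proj2 hm1 _ _ _ Hdu). pose proof (proj2 hm1 _ _ _ Hu). lra. }
  pose proof (le_join_value Hwv) as Hle.
  rewrite (proj2 hm1 _ _ _ Hw), (proj2 hm2 _ _ _ Hv) in Hle. lra.
Qed.

Lemma join_measure (hRDP : RDP E) : measure E join_value.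
Proof.
  split.
  - intro a. pose proof (le_join_l a). pose proof (proj1 hm1 a). lra.
  - intros a b s Hs. apply Rle_antisym.
    + exact (join_subadditive hRDP Hs).
    + exact (join_superadditive Hs).
Qed.

Lemma join_least (hRDP : RDP E) (k : E -> R) :
  leJ E m1 k -> leJ E m2 k -> leJ E join_value k.
Proof.
  intros Hk1 Hk2.
  pose proof (leJ_additive (proj2 hm1) Hk1) as Hk.
  split.
  - intro a. enough (join_value a <= k a) by lra.
    apply join_value_le. intros a1 a2 H.
    rewrite (Hk _ _ _ H). pose proof (leJ_le a1 Hk1). pose proof (leJ_le a2 Hk2). lra.
  - exact (additive_sub (proj2 (join_measure hRDP)) Hk).
Qed.

Lemma join_is_joinJ (hRDP : RDP E) : is_joinJ E m1 m2 join_value.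
Proof.
  pose proof (join_measure hRDP) as HJ.
  split; [exact (measure_inJ HJ) | split; [|split]].
  - split; [intro a; pose proof (le_join_l a); lra |].
    exact (additive_sub (proj2 hm1) (proj2 HJ)).
  - split; [intro a; pose proof (le_join_r a); lra |].
    exact (additive_sub (proj2 hm2) (proj2 HJ)).
  - intros k _ Hk1 Hk2. exact (join_least hRDP Hk1 Hk2).
Qed.

Definition meet_value (a : E) : R := m1 a + m2 a - join_value a.

Lemma meet_is_meetJ (hRDP : RDP E) : is_meetJ E m1 m2 meet_value.
Proof.
  pose proof (join_is_joinJ hRDP) as [_ [Hj1 [Hj2 _]]].
  split; [|split; [|split]].
  - exists (fun a => m1 a + m2 a), join_value.
    split; [exact (measure_add hm1 hm2) |].
    split; [exact (join_measure hRDP) | reflexivity].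
  - apply (measure_ext (m := fun a => join_value a - m2 a)); [|exact Hj2].
    intro a. unfold meet_value. ring.
  - apply (measure_ext (m := fun a => join_value a - m1 a)); [|exact Hj1].
    intro a. unfold meet_value. ring.
  - intros k _ Hk1 Hk2.
    (* k <= m1, m2 means m1 + m2 - k is an upper bound of m1 and m2 *)
    assert (Hup : leJ E join_value (fun a => m1 a + m2 a - k a)).
    { apply (join_least hRDP).
      - apply (measure_ext (m := fun a => m2 a - k a)); [intro; ring | exact Hk2].
      - apply (measure_ext (m := fun a => m1 a - k a)); [intro; ring | exact Hk1]. }
    apply (measure_ext (m := fun a => m1 a + m2 a - k a - join_value a));
      [intro a; unfold meet_value; ring | exact Hup].
Qed.

End Join.

Section SigmaAdditivity.

Variables (E : PEA) (m1 m2 : E -> R).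
Hypotheses (hm1 : measure E m1) (hs1 : sigma_additive E m1)
           (hm2 : measure E m2) (hs2 : sigma_additive E m2).

Lemma joinJ_sigma_additive (m : E -> R) :
  is_joinJ E m1 m2 m -> measure E m /\ sigma_additive E m.
Proof.
  intros [_ [Hm1 [_ Hleast]]].
  pose proof (measure_add hm1 hm2) as Hsum.
  assert (Hup : leJ E m (fun a => m1 a + m2 a)).
  { apply Hleast; [exact (measure_inJ Hsum) | |].
    - apply (measure_ext (m := m2)); [intro; ring | exact hm2].
    - apply (measure_ext (m := m1)); [intro; ring | exact hm1]. }
  pose proof (leJ_measure hm1 Hm1) as Hm.
  split; [exact Hm |].
  apply (sigma_additive_dominated Hm Hsum (sigma_additive_add hs1 hs2)).
  intro a. exact (leJ_le a Hup).
Qed.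

Lemma meetJ_sigma_additive (m : E -> R) :
  is_meetJ E m1 m2 m -> measure E m /\ sigma_additive E m.
Proof.
  intros [_ [Hm1 [_ Hgreatest]]].
  assert (Hzero : measure E (fun _ => 0))
    by (split; [intros; lra | intros a b s _; ring]).
  assert (Hlow : leJ E (fun _ => 0) m).
  { apply Hgreatest; [exact (measure_inJ Hzero) | |].
    - apply (measure_ext (m := m1)); [intro; ring | exact hm1].
    - apply (measure_ext (m := m2)); [intro; ring | exact hm2]. }
  assert (Hm : measure E m)
    by (apply (measure_ext (m := fun a => m a - 0)); [intro; ring | exact Hlow]).
  split; [exact Hm |].
  apply (sigma_additive_dominated Hm hm1 hs1). intro a. exact (leJ_le a Hm1).
Qed.

End SigmaAdditivity.

Unset Implicit Arguments.

Theorem proposition4p4 (E : PEA) (hRDP : RDP E) (m1 m2 : E -> R)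
  (hm1 : measure E m1) (hs1 : sigma_additive E m1)
  (hm2 : measure E m2) (hs2 : sigma_additive E m2) :
  ((exists m, is_joinJ E m1 m2 m) /\
   (forall m, is_joinJ E m1 m2 m -> measure E m /\ sigma_additive E m)) /\
  ((exists m, is_meetJ E m1 m2 m) /\
   (forall m, is_meetJ E m1 m2 m -> measure E m /\ sigma_additive E m)).
Proof.
  split; split.
  - exists (join_value hm1 hm2). exact (join_is_joinJ hm1 hm2 hRDP).
  - exact (joinJ_sigma_additive hm1 hs1 hm2 hs2).
  - exists (meet_value hm1 hm2). exact (meet_is_meetJ hm1 hm2 hRDP).
  - exact (meetJ_sigma_additive hm1 hs1 hm2).
Qed.
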